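(* A quiver $J$ is mono-injective in the category $\mathbf{Quiv}$ of quivers and quiver homomorphisms if and only if $J$ is loaded and has at least one vertex.
   Context: A quiver is a quadruple $(V,E,\sigma,\tau)$ with $V,E$ sets and $\sigma,\tau : E \to V$ functions (source and target maps). A quiver homomorphism $G \to H$ is a pair $(\phi_V,\phi_E)$ of functions $\phi_V : V_G \to V_H$, $\phi_E : E_G \to E_H$ with $\phi_V\circ\sigma_G = \sigma_H\circ\phi_E$ and $\phi_V\circ\tau_G=\tau_H\circ\phi_E$; composition is componentwise. A quiver homomorphism is a monomorphism in $\mathbf{Quiv}$ if and only if both its vertex map and edge map are injective. A quiver $J$ is mono-injective if for every monomorphism $\phi : A \to B$ and every homomorphism $\psi : A \to J$ there is a homomorphism $\hat\psi : B \to J$ with $\hat\psi\circ\phi=\psi$. For $v,w\in V(J)$, $\mathrm{edges}_J(v,w) := \sigma_J^{-1}(v)\cap\tau_J^{-1}(w)$; $J$ is loaded if $\mathrm{edges}_J(v,w)\neq\emptyset$ for all $v,w\in V(J)$. *)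

Set Implicit Arguments.

Record quiver : Type := Quiver {
  qV : Type;
  qE : Type;
  qsrc : qE -> qV;
  qtgt : qE -> qV
}.

Record qhom (G H : quiver) : Type := QHom {
  homV : qV G -> qV H;
  homE : qE G -> qE H;
  hom_src : forall e, homV (qsrc G e) = qsrc H (homE e);
  hom_tgt : forall e, homV (qtgt G e) = qtgt H (homE e)
}.

Definition qcomp (A B C : quiver) (g : qhom B C) (f : qhom A B) : qhom A C.
Proof.
  refine (@QHom A C (fun v => homV g (homV f v)) (fun e => homE g (homE f e)) _ _).
  - intro e. rewrite (hom_src f e). apply (hom_src g).
  - intro e. rewrite (hom_tgt f e). apply (hom_tgt g).
Defined.

Definition qmono (A B : quiver) (phi : qhom A B) : Prop :=
  forall (C : quiver) (g h : qhom C A), qcomp phi g = qcomp phi h -> g = h.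

Definition mono_injective (J : quiver) : Prop :=
  forall (A B : quiver) (phi : qhom A B) (psi : qhom A J),
    qmono phi -> exists psihat : qhom B J, qcomp psihat phi = psi.

Definition edges (J : quiver) (v w : qV J) : qE J -> Prop :=
  fun e => qsrc J e = v /\ qtgt J e = w.

Definition loaded (J : quiver) : Prop :=
  forall v w : qV J, exists e : qE J, edges J v w e.

(* A monomorphism is a pair of injections, so a homomorphism into a loaded quiver
   with a vertex extends along it: keep the given values on the image, send new
   vertices to an arbitrary vertex, and send each new edge to some edge between
   the images of its endpoints, which exists by loadedness.  Conversely, extending
   along the inclusion of the empty quiver into a single vertex produces a vertex
   of J, and extending along the inclusion of two vertices into the quiver with one
   edge between them produces an edge between any two prescribed vertices. *)
From Stdlib Require Import ClassicalEpsilon FunctionalExtensionality ProofIrrelevance FinFun.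

Lemma qhom_ext (G H : quiver) (g h : qhom G H) :
  (forall v, homV g v = homV h v) -> (forall e, homE g e = homE h e) -> g = h.
Proof.
  destruct g as [gV gE gs gt], h as [hV hE hs ht]; simpl; intros HV HE.
  assert (gV = hV) by (apply functional_extensionality; exact HV); subst hV.
  assert (gE = hE) by (apply functional_extensionality; exact HE); subst hE.
  f_equal; apply functional_extensionality_dep; intros; apply proof_irrelevance.
Qed.

Definition discrete_quiver (V : Type) : quiver :=
  Quiver (fun e : Empty_set => match e with end : V)
         (fun e : Empty_set => match e with end : V).

Definition arrow_quiver : quiver := Quiver (fun _ : unit => true) (fun _ : unit => false).

Definition discrete_hom (V : Type) (G : quiver) (f : V -> qV G) :
  qhom (discrete_quiver V) G :=
  @QHom (discrete_quiver V) G f (fun e => match e with end)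
        (fun e => match e with end) (fun e => match e with end).

Definition arrow_hom (G : quiver) (e : qE G) : qhom arrow_quiver G :=
  @QHom arrow_quiver G (fun b : bool => if b then qsrc G e else qtgt G e) (fun _ => e)
        (fun _ => eq_refl) (fun _ => eq_refl).

Section Monomorphisms.
Context {A B : quiver}.
Variable phi : qhom A B.

Lemma injective_qmono : Injective (homV phi) -> Injective (homE phi) -> qmono phi.
Proof.
  intros injV injE C g h Hgh; apply qhom_ext.
  - intro v; apply injV; exact (f_equal (fun k => homV k v) Hgh).
  - intro e; apply injE; exact (f_equal (fun k => homE k e) Hgh).
Qed.

Hypothesis phi_mono : qmono phi.

Lemma qmono_injV : Injective (homV phi).
Proof.
  intros a1 a2 Ha.
  assert (Heq : discrete_hom unit A (fun _ => a1) = discrete_hom unit A (fun _ => a2)).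
  { apply phi_mono, qhom_ext; [intro; exact Ha | intros []]. }
  exact (f_equal (fun k : qhom (discrete_quiver unit) A => homV k tt) Heq).
Qed.

Lemma qmono_injE : Injective (homE phi).
Proof.
  intros a1 a2 Ha.
  assert (Heq : arrow_hom A a1 = arrow_hom A a2).
  { apply phi_mono, qhom_ext; simpl; [intros [] | intro; exact Ha].
    - now rewrite !hom_src, Ha.
    - now rewrite !hom_tgt, Ha. }
  exact (f_equal (fun k : qhom arrow_quiver A => homE k tt) Heq).
Qed.

End Monomorphisms.

Section ExtendAlong.
Context {X Y Z : Type}.
Variables (f : X -> Y) (g : X -> Z) (default : Y -> Z).

Definition extend_along (y : Y) : Z :=
  match excluded_middle_informative (exists x, f x = y) with
  | left Hy => g (proj1_sig (constructive_indefinite_description _ Hy))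
  | right _ => default y
  end.

Lemma extend_along_image : Injective f -> forall x, extend_along (f x) = g x.
Proof.
  intros injf x; unfold extend_along.
  destruct excluded_middle_informative as [Hy | Hy].
  - destruct constructive_indefinite_description as [x' Hx']; simpl.
    now rewrite (injf _ _ Hx').
  - exfalso; apply Hy; now exists x.
Qed.

Lemma extend_along_outside y : ~ (exists x, f x = y) -> extend_along y = default y.
Proof.
  intro Hy; unfold extend_along.
  now destruct excluded_middle_informative.
Qed.

End ExtendAlong.

Section Extension.
Context {A B J : quiver}.
Variables (phi : qhom A B) (psi : qhom A J).
Hypotheses (injV : Injective (homV phi)) (injE : Injective (homE phi)).
Hypotheses (J_loaded : loaded J) (v0 : qV J).

Let extV : qV B -> qV J := extend_along (homV phi) (homV psi) (fun _ => v0).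

Let new_edge (e : qE B) : qE J :=
  proj1_sig (constructive_indefinite_description _ (J_loaded (extV (qsrc B e)) (extV (qtgt B e)))).

Let extE : qE B -> qE J := extend_along (homE phi) (homE psi) new_edge.

Lemma extension_edges e : edges J (extV (qsrc B e)) (extV (qtgt B e)) (extE e).
Proof.
  destruct (excluded_middle_informative (exists a, homE phi a = e)) as [[a <-] | He].
  - unfold extE, extV; rewrite extend_along_image by exact injE.
    rewrite <- hom_src, <- hom_tgt, !extend_along_image by exact injV.
    split; symmetry; [apply hom_src | apply hom_tgt].
  - unfold extE; rewrite extend_along_outside by exact He.
    unfold new_edge; now destruct constructive_indefinite_description.
Qed.

Definition extension : qhom B J :=
  @QHom B J extV extE (fun e => eq_sym (proj1 (extension_edges e)))
        (fun e => eq_sym (proj2 (extension_edges e))).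

Lemma extension_comp : qcomp extension phi = psi.
Proof. apply qhom_ext; intro; apply extend_along_image; assumption. Qed.

End Extension.

Lemma mono_injective_inhabited (J : quiver) : mono_injective J -> inhabited (qV J).
Proof.
  intro MI.
  destruct (MI _ _ (discrete_hom Empty_set (discrete_quiver unit) (fun v => match v with end))
                   (discrete_hom Empty_set J (fun v => match v with end))) as [ext _].
  - apply injective_qmono; intros [].
  - exact (inhabits (homV ext tt)).
Qed.

Lemma mono_injective_loaded (J : quiver) : mono_injective J -> loaded J.
Proof.
  intros MI v w.
  destruct (MI _ _ (discrete_hom bool arrow_quiver (fun b => b))
                   (discrete_hom bool J (fun b => if b then v else w))) as [ext Hext].
  - apply injective_qmono; [intros ? ? H; exact H | intros []].
  - exists (homE ext tt).
    pose proof (f_equal (fun k => homV k) Hext) as HV; simpl in HV.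
    split.
    + rewrite <- (hom_src ext tt); exact (f_equal (fun k => k true) HV).
    + rewrite <- (hom_tgt ext tt); exact (f_equal (fun k => k false) HV).
Qed.

Theorem mainTheorem2 (J : quiver) :
  mono_injective J <-> (loaded J /\ inhabited (qV J)).
Proof.
  split.
  - intro MI; split; [apply mono_injective_loaded | apply mono_injective_inhabited]; exact MI.
  - intros [J_loaded [v0]] A B phi psi phi_mono.
    exists (extension phi psi (qmono_injV phi phi_mono) (qmono_injE phi phi_mono) J_loaded v0).
    apply extension_comp.
Qed.
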